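(* Let $X$ and $T$ be topological spaces such that $X$ has the fixed point property with respect to $T$, and let $S$ be a retract of $T$ (i.e. there are continuous maps $j\colon S\to T$ and $r\colon T\to S$ with $rj=\mathrm{id}_S$). Then $X$ also has the fixed point property with respect to $S$.
   Context: A continuous family of self-maps of a topological space $X$ parametrized by a topological space $T$ is a continuous map $f\colon T\times X\to X$. A continuous family of fixed points of such $f$ is a continuous map $p\colon T\to X$ with $f(t,p(t))=p(t)$ for all $t\in T$. The space $X$ has the fixed point property with respect to $T$ if every continuous family $f\colon T\times X\to X$ of self-maps of $X$ admits at least one continuous family of fixed points. *)

From mathcomp Require Import all_boot all_algebra.
From mathcomp Require Import all_classical all_reals all_analysis.
Set Implicit Arguments. Unset Strict Implicit. Unset Printing Implicit Defensive.

(* A continuous family of self-maps of X parametrized by T is a continuous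
   f : T * X -> X (product topology). *)
Definition continuous_fixed_point_family (T X : topologicalType)
    (f : T * X -> X) (p : T -> X) : Prop :=
  continuous p /\ forall t : T, f (t, p t) = p t.

Definition fixed_point_property_wrt (X T : topologicalType) : Prop :=
  forall f : T * X -> X, continuous f ->
    exists p : T -> X, continuous_fixed_point_family f p.

From mathcomp Require Import all_boot all_algebra.
From mathcomp Require Import all_classical all_reals all_analysis.

(* Pull the family f over S back along r to a family over T, take a continuous
   family of fixed points p there, and restrict it along j: since r (j s) = s,
   p (j s) is a fixed point of f (s, _). *)

Lemma continuous_reparam {X T S : topologicalType} (f : S * X -> X) (r : T -> S) :
  continuous f -> continuous r ->
  continuous (fun z : T * X => f (r z.1, z.2)).
Proof.
move=> cf cr z.
apply: (@continuous_comp _ _ _ (fun z : T * X => (r z.1, z.2)) f); last exact: cf.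
apply: cvg_pair; last exact: cvg_snd.
by apply: (@continuous_comp _ _ _ fst r); [exact: cvg_fst | exact: cr].
Qed.

Lemma continuous_fixed_point_family_section {X T S : topologicalType}
    (f : S * X -> X) (j : S -> T) (r : T -> S) (p : T -> X) :
  continuous j -> cancel j r ->
  continuous_fixed_point_family (fun z : T * X => f (r z.1, z.2)) p ->
  continuous_fixed_point_family f (p \o j).
Proof.
move=> cj rj [cp fp]; split.
  by move=> s; apply: continuous_comp; [exact: cj | exact: cp].
by move=> s /=; rewrite -{1}(rj s); exact: fp.
Qed.

Theorem proposition3p1 (X T S : topologicalType) :
  fixed_point_property_wrt X T ->
  forall (j : S -> T) (r : T -> S),
    continuous j -> continuous r -> (forall s : S, r (j s) = s) ->
    fixed_point_property_wrt X S.
Proof.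
move=> fppT j r cj cr rj f cf.
have [p fam_p] := fppT _ (@continuous_reparam X T S f r cf cr).
exists (p \o j).
exact: (@continuous_fixed_point_family_section X T S f j r p cj rj fam_p).
Qed.
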